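(* Let $n>2k$, $k\ge t+3$, and let $\mathcal F\subseteq\binom{[n]}{k}$ be a maximal $t$-intersecting family with $\tau_t(\mathcal F)=t+2$ and $\tau_t(\mathcal T_t(\mathcal F))=t+1$. Suppose there exist $U_0\in\mathcal U_t(\mathcal F)$ and $F_0\in\mathcal F$ with $|U_0\cap F_0|=t-1$ such that $\mathcal T_t(\mathcal F)\subseteq\binom{U_0\cup F_0}{t+2}$. Then at least one of the following holds: (i) $|\mathcal T_t(\mathcal F)|<\max\left\{(k-t)(k-t+1),\ (t+2)(k-t)+1,\ \binom{t+4}{2}\right\}$; (ii) there exist $M\in\binom{[n]}{k+2}$ and $W\in\binom{M}{t+2}$ such that $\mathcal T_t(\mathcal F)=\left\{T\in\binom{M}{t+2}: |T\cap W|\ge t+1\right\}$.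
   Context: A family is $t$-intersecting if any two members meet in at least $t$ elements. A $t$-cover of a family $\mathcal G$ of subsets of $[n]$ is a set $S\subseteq[n]$ with $|S\cap G|\ge t$ for all $G\in\mathcal G$; $\tau_t(\mathcal G)$ is the minimum size of a $t$-cover, and $\mathcal T_t(\mathcal G)$ is the set of all $t$-covers of $\mathcal G$ of size $\tau_t(\mathcal G)$. $\mathcal U_t(\mathcal F)=\mathcal T_t(\mathcal T_t(\mathcal F))$ is the family of all minimum-size $t$-covers of $\mathcal T_t(\mathcal F)$. A $t$-intersecting $\mathcal F\subseteq\binom{[n]}{k}$ is maximal if no $t$-intersecting subfamily of $\binom{[n]}{k}$ properly contains it. *)

From mathcomp Require Import all_boot.
Set Implicit Arguments. Unset Strict Implicit. Unset Printing Implicit Defensive.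

(* Ground set [n] is modelled by 'I_n; families are {set {set 'I_n}}. *)
Section Defs.
Variable n : nat.
Local Notation fam := {set {set 'I_n}}.

Definition ksets (X : {set 'I_n}) (k : nat) : fam :=
  [set A : {set 'I_n} | (A \subset X) && (#|A| == k)].

Definition t_intersecting (t : nat) (F : fam) : Prop :=
  forall A B, A \in F -> B \in F -> t <= #|A :&: B|.

Definition maximal_t_intersecting (t k : nat) (F : fam) : Prop :=
  [/\ F \subset ksets setT k, t_intersecting t F &
      forall G : fam, G \subset ksets setT k -> t_intersecting t G ->
        F \subset G -> G = F].

Definition is_tcover (t : nat) (G : fam) (S : {set 'I_n}) : bool :=
  [forall A in G, t <= #|S :&: A|].

(* tau_t(G): minimum size of a t-cover (n.+1 if no t-cover exists) *)
Definition tau (t : nat) (G : fam) : nat :=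
  \big[minn/n.+1]_(S : {set 'I_n} | is_tcover t G S) #|S|.

Definition Tt (t : nat) (G : fam) : fam :=
  [set S : {set 'I_n} | is_tcover t G S & #|S| == tau t G].

Definition Ut (t : nat) (F : fam) : fam := Tt t (Tt t F).
End Defs.

From mathcomp Require Import all_boot all_order zify.
Import Order.TTheory.
Set Implicit Arguments. Unset Strict Implicit. Unset Printing Implicit Defensive.

(* Let U := U0 and M := U0 :|: F0, a (k+2)-set containing every member of
   T := T_t(F).  Maximality of F makes T t-intersecting.  A member of T
   either contains U (at most |M \ U| = k-t+1 of these) or is "thin":
   t points of U plus a tail pair in M \ U.  Thin members with
   different bases have meeting tails, and bases do vary because no t-subset
   of U covers T.  If two tails are disjoint, or the tails form a triangle,
   few thin members remain and (i) holds.  Otherwise the tails form a star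
   with centre c, and T lies in the family of (t+2)-subsets of M meeting
   W := c |: U in t+1 points; that family has at most (t+2)(k-t)+1 members,
   so T equals it unless (i) holds. *)

Section FinsetFacts.
Variable T : finType.
Implicit Types (A X : {set T}) (P : {set {set T}}).

Lemma cards2_memP X x : #|X| = 2 -> x \in X -> exists2 y, y != x & X = [set x; y].
Proof.
move=> /eqP/cards2P [a [b [ab ->]]]; rewrite !inE => /orP [] /eqP ->.
  by exists b; rewrite // eq_sym.
by exists a; rewrite // setUC.
Qed.

Lemma cards2_eq X x y : #|X| = 2 -> x \in X -> y \in X -> x != y -> X = [set x; y].
Proof.
move=> cX xX yX xy; apply/esym/eqP; rewrite eqEcard cX cards2 xy andbT.
by apply/subsetP => z; rewrite !inE => /orP [] /eqP ->.
Qed.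

Lemma exists_subset_card A j : j <= #|A| -> exists2 X : {set T}, X \subset A & #|X| = j.
Proof.
case/card_geqP => s [us ss sA]; exists [set x in s].
  by apply/subsetP => x; rewrite inE => /sA.
by rewrite cardsE -ss; apply/card_uniqP.
Qed.

Lemma cards3 (x y z : T) : uniq [:: x; y; z] -> #|[set x; y; z]| = 3.
Proof.
rewrite /= !inE negb_or => /and3P [/andP [xy xz] yz _].
by rewrite setUC cardsU1 cards2 xy !inE negb_or eq_sym xz eq_sym yz.
Qed.

Lemma setI2_eq0 (a b c d : T) : a != c -> a != d -> b != c -> b != d ->
  [set a; b] :&: [set c; d] = set0.
Proof.
move=> ac ad bc bd; apply/setP => x; rewrite !inE.
by apply/negbTE; apply/negP => /andP [/orP [] /eqP -> /orP [] /eqP e]; rewrite e eqxx in ac ad bc bd.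
Qed.

Lemma intersecting_pairs_star_or_triangle P p0 :
  p0 \in P -> {in P, forall p : {set T}, #|p| = 2} ->
  {in P &, forall p q : {set T}, p :&: q != set0} ->
  (exists c : T, {in P, forall p : {set T}, c \in p}) \/
  exists2 Z : {set T}, #|Z| = 3 & {in P, forall p : {set T}, p \subset Z}.
Proof.
move=> p0P card2 meet.
have [/existsP [c /forall_inP starc]|nostar] := boolP [exists c, [forall p in P, c \in p]].
  by left; exists c.
right.
have avoid c : exists2 p, p \in P & c \notin p.
  by case/existsPn/(_ c)/forall_inPn: nostar => p pP cp; exists p.
have meet_pair r a b : r \in P -> [set a; b] \in P -> a \notin r -> b \in r.
  move=> rP abP ar; case/set0Pn: (meet _ _ rP abP) => u.
  rewrite !inE => /andP [ur /orP [] /eqP eu]; last by rewrite -eu.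
  by rewrite -eu ur in ar.
have [x x0] : exists x, x \in p0 by apply/set0Pn; rewrite -card_gt0 card2.
have [y yx p0E] := cards2_memP (card2 _ p0P) x0.
have [p pP xp] := avoid x.
have yp : y \in p by apply: meet_pair pP _ xp; rewrite -p0E.
have [z zy pE] := cards2_memP (card2 _ pP) yp.
have zx : z != x by apply: contraNneq xp => <-; rewrite pE !inE eqxx orbT.
have [q qP yq] := avoid y.
have xq : x \in q by apply: meet_pair qP _ yq; rewrite setUC -p0E.
have zq : z \in q by apply: meet_pair qP _ yq; rewrite -pE.
have qE : q = [set x; z] by apply: cards2_eq; rewrite ?card2 // eq_sym.
exists [set x; y; z].
  by rewrite cards3 //= !inE negb_or eq_sym yx eq_sym zx eq_sym zy.
move=> r rP; apply/subsetP => w wr; apply/negPn/negP; rewrite !inE !negb_or.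
move=> /andP [/andP [wx wy] wz].
have [v _ rE] := cards2_memP (card2 _ rP) wr.
have rP' : [set w; v] \in P by rewrite -rE.
have vp0 : v \in p0 by apply: meet_pair p0P rP' _; rewrite p0E !inE negb_or wx.
have vp : v \in p by apply: meet_pair pP rP' _; rewrite pE !inE negb_or wy.
have vq : v \in q by apply: meet_pair qP rP' _; rewrite qE !inE negb_or wx.
have vy : v = y.
  by move: vp0; rewrite p0E !inE => /orP [] /eqP // ev; rewrite -ev vp in xp.
by rewrite -vy vq in yq.
Qed.
End FinsetFacts.

Section Covers.
Variables n t : nat.
Implicit Types (F G : {set {set 'I_n}}) (S K : {set 'I_n}).

Lemma tau_le G S : is_tcover t G S -> tau t G <= #|S|.
Proof.
by move=> cov; have := @bigmin_le_cond _ nat _ n.+1 S _ (fun S => #|S|) cov; rewrite minEnat.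
Qed.

Lemma maximal_tcover_supset k F S K :
  maximal_t_intersecting t k F -> t <= k -> is_tcover t F S ->
  S \subset K -> #|K| = k -> K \in F.
Proof.
move=> [Fk Fint Fmax] tk /forall_inP covS SK cK.
have KF A : A \in F -> t <= #|K :&: A|.
  by move=> AF; apply: leq_trans (covS A AF) (subset_leq_card (setSI A SK)).
suff <- : K |: F = F by rewrite setU11.
apply: Fmax; last exact: subsetUr.
  apply/subsetP => A; rewrite in_setU1 => /orP [/eqP ->|/(subsetP Fk)//].
  by rewrite inE subsetT cK eqxx.
move=> A B; rewrite !in_setU1 => /orP [/eqP ->|AF] /orP [/eqP ->|BF].
- by rewrite setIid cK.
- exact: KF.
- by rewrite setIC KF.
- exact: Fint.
Qed.

(* Extend S by k - #|S| points outside S :|: S'; the resulting k-set lies in F,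
   and S' meets it only inside S. *)
Lemma maximal_tcovers_intersect k F S S' :
  maximal_t_intersecting t k F -> t <= k -> is_tcover t F S -> is_tcover t F S' ->
  #|S| <= k -> k + #|S'| <= n -> t <= #|S :&: S'|.
Proof.
move=> maxF tk covS covS' Sk kn.
have outside : k - #|S| <= #|~: (S :|: S')|.
  have := cardsC (S :|: S'); rewrite card_ord; have := (leq_card_setU S S').1; lia.
have [X Xout cX] := exists_subset_card outside.
have XS0 (A : {set 'I_n}) : A \subset S :|: S' -> A :&: X = set0.
  move=> AS; apply/setP => x; rewrite !inE; apply/negbTE/andP => -[xA].
  by move/(subsetP Xout); rewrite inE (subsetP AS).
have KF : S :|: X \in F.
  apply: maximal_tcover_supset maxF tk covS (subsetUl S X) _.
  by rewrite cardsU XS0 ?subsetUl // cards0 cX; lia.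
have /forall_inP/(_ _ KF) := covS'.
by rewrite setIUr XS0 ?subsetUr // setU0 setIC.
Qed.

Lemma Tt_t_intersecting k F :
  maximal_t_intersecting t k F -> t <= k -> tau t F <= k -> k + tau t F <= n ->
  t_intersecting t (Tt t F).
Proof.
move=> maxF tk tauk ntau S S'; rewrite !inE => /andP [covS /eqP cS] /andP [covS' /eqP cS'].
by apply: maximal_tcovers_intersect maxF tk covS covS' _ _; rewrite ?cS ?cS'.
Qed.

End Covers.

Section NearSets.
Variable n : nat.
Implicit Types M W S : {set 'I_n}.

(* A (w+1)-set meeting W in w points is W with one point swapped out. *)
Lemma card_near_ksets M W w : W \subset M -> #|W| = w.+1 ->
  #|[set S in ksets M w.+1 | w <= #|S :&: W|]| <= 1 + w.+1 * (#|M| - w.+1).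
Proof.
move=> WM cW.
set swaps := [set (W :\ p.1) :|: [set p.2] | p in setX W (M :\: W)].
suff sub : [set S in ksets M w.+1 | w <= #|S :&: W|] \subset W |: swaps.
  apply: leq_trans (subset_leq_card sub) _; rewrite cardsU1 leq_add ?leq_b1 //.
  by apply: leq_trans (leq_imset_card _ _) _; rewrite cardsX cardsDS // cW.
apply/subsetP => S; rewrite !inE => /andP [/andP [SM /eqP cS] wS].
have: #|S :&: W| <= w.+1 by rewrite -cW subset_leq_card ?subsetIr.
rewrite leq_eqVlt ltnS => /orP [/eqP full|part].
  have SWS : S :&: W = S by apply/eqP; rewrite eqEcard subsetIl cS full ltnSn.
  have SWW : S :&: W = W by apply/eqP; rewrite eqEcard subsetIr cW full ltnSn.
  by rewrite -SWS SWW eqxx.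
have SW : #|S :&: W| = w by apply/anti_leq; rewrite part wS.
have /cards1P [a aE] : #|W :\: S| == 1.
  by have := cardsID S W; rewrite setIC cW SW => h; apply/eqP; lia.
have /cards1P [b bE] : #|S :\: W| == 1.
  by have := cardsID W S; rewrite cS SW => h; apply/eqP; lia.
have aWS : a \in W :\: S by rewrite aE set11.
have bSW : b \in S :\: W by rewrite bE set11.
apply/orP; right; apply/imsetP; exists (a, b).
  move: aWS bSW; rewrite !inE => /andP [_ ->] /andP [-> bS].
  by rewrite (subsetP SM).
by rewrite /= -aE -bE setDDr setDv set0U setIC setID.
Qed.
End NearSets.

Section CoverStructure.
Variables (n t : nat) (U M : {set 'I_n}) (T : {set {set 'I_n}}).
Hypothesis t_gt0 : 0 < t.
Hypothesis cardU : #|U| = t + 1.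
Hypothesis subUM : U \subset M.
Hypothesis T_ksets : T \subset ksets M (t + 2).
Hypothesis U_tcover : is_tcover t T U.
Hypothesis T_tint : t_intersecting t T.
Hypothesis U_tau : forall B : {set 'I_n}, B \subset U -> #|B| = t -> ~~ is_tcover t T B.

(* Members of T either contain U or meet it in exactly t points (the thin
   members T2); a thin member S splits into its base S :&: U, a t-subset
   of U, and its tail S :\: U, a 2-subset of C. *)
Implicit Types (S B Z p : {set 'I_n}) (c : 'I_n).

Let C := M :\: U.
Let T2 := [set S in T | #|S :&: U| == t].
Let bases := [set B : {set 'I_n} | B \subset U & #|B| == t].

Lemma mem_T S : S \in T -> [/\ S \subset M, #|S| = t + 2 & t <= #|S :&: U|].
Proof.
move=> ST; move/subsetP/(_ S ST): T_ksets; rewrite inE => /andP [SM /eqP cS].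
by split=> //; move/forall_inP/(_ S ST): U_tcover; rewrite setIC.
Qed.

Lemma mem_T2 S : S \in T2 -> [/\ S \in T, #|S :&: U| = t, #|S :\: U| = 2 & S :\: U \subset C].
Proof.
rewrite inE => /andP [ST /eqP SU]; have [SM cS _] := mem_T ST; split=> //.
  by have := cardsID U S; rewrite cS SU; lia.
exact: setSD.
Qed.

Lemma T_full_or_thin S : S \in T -> U \subset S \/ S \in T2.
Proof.
move=> ST; have [_ _ tSU] := mem_T ST.
have : #|S :&: U| <= t + 1 by rewrite -cardU subset_leq_card ?subsetIr.
rewrite leq_eqVlt addn1 ltnS => /orP [/eqP full|thin].
  left; have <- : S :&: U = U.
    by apply/eqP; rewrite eqEcard subsetIr cardU full addn1 leqnn.
  exact: subsetIl.
by right; rewrite inE ST eqn_leq thin tSU.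
Qed.

Lemma card_T_le : #|T| <= #|C| + #|T2|.
Proof.
suff sub : T \subset [set c |: U | c in C] :|: T2.
  apply: leq_trans (subset_leq_card sub) _; apply: leq_trans (leq_card_setU _ _) _.
  by rewrite leq_add2r leq_imset_card.
apply/subsetP => S ST; rewrite inE; have [US|thin] := T_full_or_thin ST; last first.
  by rewrite thin orbT.
have [SM cS _] := mem_T ST.
have /cards1P [c cE] : #|S :\: U| == 1.
  by have := cardsID U S; rewrite cS (setIidPr US) cardU => h; apply/eqP; lia.
have cSU : c \in S :\: U by rewrite cE set11.
apply/orP; left; apply/imsetP; exists c.
  by move: cSU; rewrite !inE => /andP [-> /(subsetP SM)].
by rewrite -(setID S U) (setIidPr US) cE setUC.
Qed.

Lemma thin_tails_meet S S' : S \in T2 -> S' \in T2 -> S :&: U != S' :&: U ->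
  (S :\: U) :&: (S' :\: U) != set0.
Proof.
move=> /mem_T2 [ST SU _ _] /mem_T2 [S'T S'U _ _] neq.
have few_common : #|(S :&: U) :&: (S' :&: U)| < t.
  rewrite ltnNge; apply: contra neq => many.
  have e1 : (S :&: U) :&: (S' :&: U) = S :&: U.
    by apply/eqP; rewrite eqEcard subsetIl SU.
  have e2 : (S :&: U) :&: (S' :&: U) = S' :&: U.
    by apply/eqP; rewrite eqEcard subsetIr S'U.
  by rewrite -e1 e2.
have := T_tint ST S'T; have := cardsID U (S :&: S').
have -> : S :&: S' :&: U = (S :&: U) :&: (S' :&: U) by rewrite setIACA setIid.
rewrite -setDIl -card_gt0; lia.
Qed.

Lemma exists_thin_other_base B : B \subset U -> #|B| = t ->
  exists2 S, S \in T2 & S :&: U != B.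
Proof.
move=> BU cB; have /forall_inPn [S ST] := U_tau BU cB; rewrite -ltnNge => few.
exists S; last first.
  by apply: contraTneq few => <-; rewrite setIAC setIid -leqNgt; case: (mem_T ST).
have [US|//] := T_full_or_thin ST.
by move: few; rewrite (setIidPl (subset_trans BU US)) cB ltnn.
Qed.

Lemma card_bases : #|bases| = t + 1.
Proof. by rewrite cards_draws cardU addn1 binSn. Qed.

Lemma card_thin_tail p : #|[set S in T2 | S :\: U == p]| <= t + 1.
Proof.
rewrite -card_bases; apply: leq_trans (leq_imset_card (fun B => B :|: p) _).
apply/subset_leq_card/subsetP => S; rewrite inE => /andP [ST2 /eqP tailS].
have [_ SU _ _] := mem_T2 ST2; apply/imsetP; exists (S :&: U).
  by rewrite inE subsetIr SU eqxx.
by rewrite -tailS setID.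
Qed.

Lemma thin_disjoint_tails_base S S' : S \in T2 -> S' \in T2 ->
  (S :\: U) :&: (S' :\: U) = set0 -> S :&: U = S' :&: U.
Proof.
move=> ST2 S'T2 disj; apply/eqP/negPn/negP => /(thin_tails_meet ST2 S'T2).
by rewrite disj eqxx.
Qed.

Lemma card_thin_disjoint_tails p1 p2 : p1 :&: p2 = set0 ->
  #|[set S in T2 | (S :\: U == p1) || (S :\: U == p2)]| <= t + 1.
Proof.
move=> p12; set X := [set S in T2 | _].
have [/exists_inP [S1 S1T2 /eqP tail1]|/exists_inPn no1] :=
  boolP [exists S in T2, S :\: U == p1]; last first.
  apply: leq_trans (card_thin_tail p2); apply/subset_leq_card/subsetP => S.
  move=> /setIdP [ST2 /orP [/eqP tail|tail]]; apply/setIdP => //.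
  by have := no1 S ST2; rewrite tail eqxx.
have [/exists_inP [S2 S2T2 /eqP tail2]|/exists_inPn no2] :=
  boolP [exists S in T2, S :\: U == p2]; last first.
  apply: leq_trans (card_thin_tail p1); apply/subset_leq_card/subsetP => S.
  move=> /setIdP [ST2 /orP [tail|/eqP tail]]; apply/setIdP => //.
  by have := no2 S ST2; rewrite tail eqxx.
have base12 : S1 :&: U = S2 :&: U.
  by apply: thin_disjoint_tails_base; rewrite // tail1 tail2.
have baseX S : S \in X -> S :&: U = S1 :&: U.
  move=> /setIdP [ST2 /orP [] /eqP tail].
    by rewrite base12; apply: thin_disjoint_tails_base; rewrite // tail tail2.
  by apply: thin_disjoint_tails_base; rewrite // tail tail1 setIC.
have sub : X \subset [set (S1 :&: U) :|: p1; (S1 :&: U) :|: p2].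
  apply/subsetP => S SX; rewrite !inE -(baseX S SX).
  by case/setIdP: SX => _ /orP [] /eqP <-; rewrite setID eqxx ?orbT.
by apply: leq_trans (subset_leq_card sub) _; rewrite cards2; case: (_ != _); lia.
Qed.

(* Two thin members with disjoint tails {g1, g2} and {h1, h2} share their
   base A; a thin member with another base (which exists since no t-subset
   of U is a t-cover) has a tail meeting both, say {g1, h1}.  Hence every
   thin member has a tail meeting both pairs, or has base A and a tail
   meeting {g1, h1}. *)
Section DisjointTails.
Variables (A : {set 'I_n}) (g1 g2 h1 h2 : 'I_n).
Hypothesis uniq_gh : uniq [:: g1; g2; h1; h2].
Hypothesis gh_C : [set g1; g2; h1; h2] \subset C.
Hypothesis thin_dichotomy : forall S, S \in T2 ->
  ([set g1; g2] :&: (S :\: U) != set0 /\ [set h1; h2] :&: (S :\: U) != set0) \/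
  (S :&: U = A /\ [set g1; h1] :&: (S :\: U) != set0).

Let cross1 := [set S in T2 | (S :\: U == [set g1; h1]) || (S :\: U == [set g2; h2])].
Let cross2 := [set S in T2 | (S :\: U == [set g1; h2]) || (S :\: U == [set g2; h1])].
Let via_g1 := [set A :|: [set g1; z] | z in C :\: [set g1; h1; h2]].
Let via_h1 := [set A :|: [set h1; z] | z in C :\: [set h1; g1; g2]].

Lemma gh_neq : [&& g1 != g2, g1 != h1, g1 != h2, g2 != h1, g2 != h2 & h1 != h2].
Proof. by move: uniq_gh; rewrite /= !inE !negb_or -!andbA andbT. Qed.

Lemma thin_cover_disjoint_tails : T2 \subset cross1 :|: cross2 :|: via_g1 :|: via_h1.
Proof.
have /and5P [g12 g1h1 g1h2 g2h1 /andP [g2h2 h12]] := gh_neq.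
apply/subsetP => S ST2; have [ST SU cP PC] := mem_T2 ST2; rewrite !in_setU.
have cross x y : x \in [set g1; g2] -> y \in [set h1; h2] -> S :\: U = [set x; y] ->
    [|| S \in cross1 | S \in cross2].
  rewrite !inE => /orP [] /eqP -> /orP [] /eqP -> tail; apply/orP;
    [left | right | right | left]; by rewrite ST SU tail !eqxx ?orbT.
case: (thin_dichotomy ST2) => [[/set0Pn [x /setIP [xg xP]] /set0Pn [y /setIP [yh yP]]]|].
  have xy : x != y by move: xg yh; rewrite !inE => /orP [] /eqP -> /orP [] /eqP ->.
  by rewrite (cross x y) // (cards2_eq cP xP yP xy).
case=> SA /set0Pn [w /setIP [wgh wP]].
have [z zw tailE] := cards2_memP cP wP.
have zC : z \in C by apply: (subsetP PC); rewrite tailE !inE eqxx orbT.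
have SE : S = A :|: [set w; z] by rewrite -SA -tailE setID.
case/set2P: wgh => ew; subst w.
  have [ez | zh1] := eqVneq z h1; first by rewrite (cross g1 h1) ?inE ?eqxx ?orbT // tailE ez.
  have [ez | zh2] := eqVneq z h2; first by rewrite (cross g1 h2) ?inE ?eqxx ?orbT // tailE ez.
  apply/orP; left; apply/orP; right; apply/imsetP; exists z => //.
  by rewrite in_setD zC !inE !negb_or zw zh1 zh2.
have [ez | zg1] := eqVneq z g1.
  by rewrite (cross g1 h1) ?inE ?eqxx ?orbT // tailE ez setUC.
have [ez | zg2] := eqVneq z g2.
  by rewrite (cross g2 h1) ?inE ?eqxx ?orbT // tailE ez setUC.
apply/orP; right; apply/imsetP; exists z => //.
by rewrite in_setD zC !inE !negb_or zw zg1 zg2.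
Qed.

Lemma card_T2_disjoint_tails : #|T2| <= 2 * (t + 1) + 2 * (#|C| - 3).
Proof.
have /and5P [g12 g1h1 g1h2 g2h1 /andP [g2h2 h12]] := gh_neq.
have card_cross1 : #|cross1| <= t + 1.
  by apply: card_thin_disjoint_tails; apply: setI2_eq0; rewrite // eq_sym.
have card_cross2 : #|cross2| <= t + 1.
  by apply: card_thin_disjoint_tails; apply: setI2_eq0; rewrite // eq_sym.
have card_avoid (x y z : 'I_n) : uniq [:: x; y; z] -> [set x; y; z] \subset [set g1; g2; h1; h2] ->
    #|C :\: [set x; y; z]| = #|C| - 3.
  by move=> uxyz sub; rewrite cardsDS ?cards3 // (subset_trans sub gh_C).
have card_via_g1 : #|via_g1| <= #|C| - 3.
  apply: leq_trans (leq_imset_card _ _) _; rewrite card_avoid //=.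
    by rewrite !inE !negb_or g1h1 g1h2 h12.
  by apply/subsetP => v; rewrite !inE => /orP [/orP [] | ] ->; rewrite ?orbT.
have card_via_h1 : #|via_h1| <= #|C| - 3.
  apply: leq_trans (leq_imset_card _ _) _; rewrite card_avoid //=.
    by rewrite !inE !negb_or eq_sym g1h1 eq_sym g2h1 g12.
  by apply/subsetP => v; rewrite !inE => /orP [/orP [] | ] ->; rewrite ?orbT.
apply: leq_trans (subset_leq_card thin_cover_disjoint_tails) _.
rewrite !mul2n -!addnn addnA.
apply: leq_trans (leq_card_setU _ _) (leq_add _ card_via_h1).
apply: leq_trans (leq_card_setU _ _) (leq_add _ card_via_g1).
exact: leq_trans (leq_card_setU _ _) (leq_add card_cross1 card_cross2).
Qed.

End DisjointTails.

Lemma card_T2_of_disjoint_tails S1 S2 : S1 \in T2 -> S2 \in T2 ->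
  (S1 :\: U) :&: (S2 :\: U) = set0 -> #|T2| <= 2 * (t + 1) + 2 * (#|C| - 3).
Proof.
move=> S1T2 S2T2 disj.
have [_ base1 card1 sub1] := mem_T2 S1T2; have [_ _ card2 sub2] := mem_T2 S2T2.
have base12 := thin_disjoint_tails_base S1T2 S2T2 disj.
have [S3 S3T2 base3] := exists_thin_other_base (subsetIr S1 U) base1.
have [_ _ card3 _] := mem_T2 S3T2.
have /set0Pn [g1 /setIP [g1_3 g1_1]] := thin_tails_meet S3T2 S1T2 base3.
have /set0Pn [h1 /setIP [h1_3 h1_2]] : (S3 :\: U) :&: (S2 :\: U) != set0.
  by apply: thin_tails_meet; rewrite // -base12.
have [g2 g21 tail1] := cards2_memP card1 g1_1.
have [h2 h21 tail2] := cards2_memP card2 h1_2.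
have apart x y : x \in S1 :\: U -> y \in S2 :\: U -> x != y.
  move=> x1 y2; apply/eqP => exy.
  have : x \in (S1 :\: U) :&: (S2 :\: U) by rewrite in_setI x1 exy.
  by rewrite disj inE.
have in1 x : x \in [set g1; g2] -> x \in S1 :\: U by rewrite -tail1.
have in2 y : y \in [set h1; h2] -> y \in S2 :\: U by rewrite -tail2.
have tail3 := cards2_eq card3 g1_3 h1_3 (apart _ _ g1_1 h1_2).
apply: (@card_T2_disjoint_tails (S1 :&: U) g1 g2 h1 h2).
- by rewrite /= !inE !negb_or eq_sym g21 (eq_sym h1) h21 !apart ?in1 ?in2 ?inE ?eqxx ?orbT.
- by rewrite -setUA -tail1 -tail2 subUset sub1.
move=> S ST2; have [eq_base|ne_base] := eqVneq (S :&: U) (S1 :&: U).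
  right; split=> //; rewrite -tail3 setIC; apply: thin_tails_meet => //.
  by rewrite eq_base eq_sym.
left; rewrite -tail1 -tail2 setIC (setIC (S2 :\: U)); split; apply: thin_tails_meet => //.
by rewrite -base12.
Qed.

Lemma card_T2_triangle Z : #|Z| = 3 -> {in T2, forall S, S :\: U \subset Z} ->
  #|T2| <= 3 * (t + 1).
Proof.
move=> cZ tailsZ; set pairs := [set Q : {set 'I_n} | Q \subset Z & #|Q| == 2].
have sub : T2 \subset [set p.1 :|: p.2 | p in setX bases pairs].
  apply/subsetP => S ST2; have [_ SU cP _] := mem_T2 ST2.
  apply/imsetP; exists (S :&: U, S :\: U); last by rewrite setID.
  by rewrite in_setX !inE subsetIr SU tailsZ // cP !eqxx.
apply: leq_trans (subset_leq_card sub) _; apply: leq_trans (leq_imset_card _ _) _.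
by rewrite cardsX card_bases cards_draws cZ mulnC.
Qed.

Lemma T_sub_near c : c \in C -> {in T2, forall S, c \in S} ->
  T \subset [set S in ksets M (t + 2) | t + 1 <= #|S :&: (c |: U)|].
Proof.
move=> cC star; apply/subsetP => S ST; apply/setIdP; split; first exact: (subsetP T_ksets).
have [US|ST2] := T_full_or_thin ST.
  by rewrite -cardU subset_leq_card // subsetI US subsetUr.
have [_ SU _ _] := mem_T2 ST2.
have cU : c \notin U by move: cC; rewrite in_setD => /andP [].
apply: leq_trans (subset_leq_card (_ : c |: (S :&: U) \subset S :&: (c |: U))).
  by rewrite cardsU1 in_setI (negbTE cU) andbF SU addnC.
by rewrite subUset sub1set in_setI star // setU11 setISS ?subsetUr.
Qed.

Theorem card_T_small_or_near :
  #|T| <= #|C| + maxn (2 * (t + 1) + 2 * (#|C| - 3)) (3 * (t + 1)) \/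
  exists2 W, W \in ksets M (t + 2) &
    T \subset [set S in ksets M (t + 2) | t + 1 <= #|S :&: W|].
Proof.
have [B BU cB] := exists_subset_card (leq_trans (leq_addr 1 t) (eq_leq (esym cardU))).
have [S0 S0T2 _] := exists_thin_other_base BU cB.
have [/exists_inP [S1 S1T2 /exists_inP [S2 S2T2 /eqP disj]]|/exists_inPn meet] :=
  boolP [exists S1 in T2, exists S2 in T2, (S1 :\: U) :&: (S2 :\: U) == set0].
  left; apply: leq_trans card_T_le _.
  by rewrite leq_add2l leq_max (card_T2_of_disjoint_tails S1T2 S2T2 disj).
have tails_card : {in [set S :\: U | S in T2], forall p, #|p| = 2}.
  by move=> _ /imsetP [S ST2 ->]; case: (mem_T2 ST2).
have tails_meet : {in [set S :\: U | S in T2] &, forall p q, p :&: q != set0}.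
  move=> _ _ /imsetP [S1 S1T2 ->] /imsetP [S2 S2T2 ->].
  by have /exists_inPn/(_ S2 S2T2) := meet S1 S1T2.
have [[c star]|[Z cZ inZ]] := intersecting_pairs_star_or_triangle (imset_f _ S0T2)
  tails_card tails_meet; last first.
  left; apply: leq_trans card_T_le _; rewrite leq_add2l leq_max.
  by rewrite (card_T2_triangle cZ) ?orbT // => S ST2; apply: inZ; apply: imset_f.
have cC : c \in C by apply: subsetP (star _ (imset_f _ S0T2)); case: (mem_T2 S0T2).
have [cU cM] : c \notin U /\ c \in M by move: cC; rewrite in_setD => /andP [].
right; exists (c |: U).
  by rewrite inE subUset sub1set cM subUM cardsU1 cU cardU add1n addn1 addn2 eqxx.
by apply: T_sub_near => // S ST2; have := star _ (imset_f _ ST2); rewrite in_setD => /andP [].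
Qed.

End CoverStructure.

Lemma cross_bound_lt k t : 0 < t -> t + 3 <= k ->
  (k - t + 1) + maxn (2 * (t + 1) + 2 * (k - t + 1 - 3)) (3 * (t + 1)) <
  maxn (maxn ((k - t) * (k - t + 1)) ((t + 2) * (k - t) + 1)) 'C(t + 4, 2).
Proof.
move=> t_gt0 tk; rewrite !leq_max.
have [->|t_ge2] := eqVneq t 1; first by rewrite -orbA; apply/orP; left; nia.
have [k_eq | k_gt] := eqVneq k (t + 3).
  have binE : 'C(t + 4, 2) * 2 = (t + 4) * (t + 3).
    by rewrite bin_ffact ffactnS ffactn1 addnS.
  by apply/orP; right; nia.
by apply/orP; left; apply/orP; right; nia.
Qed.

Theorem lemma2p8 (n k t : nat) (F : {set {set 'I_n}}) :
  2 * k < n -> t + 3 <= k ->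
  maximal_t_intersecting t k F ->
  tau t F = t + 2 ->
  tau t (Tt t F) = t + 1 ->
  (exists U0 F0, [/\ U0 \in Ut t F, F0 \in F, #|U0 :&: F0| + 1 = t &
                   Tt t F \subset ksets (U0 :|: F0) (t + 2)]) ->
  #|Tt t F| < maxn (maxn ((k - t) * (k - t + 1)) ((t + 2) * (k - t) + 1))
                   'C(t + 4, 2)
  \/ exists M W : {set 'I_n},
       [/\ #|M| = k + 2, W \in ksets M (t + 2) &
           Tt t F = [set T : {set 'I_n} in ksets M (t + 2) | t + 1 <= #|T :&: W|]].
Proof.
move=> nk tk maxF tauF tauT [U0 [F0 [U0U F0F capUF TUF]]].
have t_gt0 : 0 < t by lia.
move: U0U; rewrite /Ut /Tt inE tauT -/(Tt t F) => /andP [U0cov /eqP cardU0].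
have cardF0 : #|F0| = k.
  by case: maxF => /subsetP/(_ F0 F0F); rewrite inE => /andP [_ /eqP].
set M := U0 :|: F0.
have cardM : #|M| = k + 2 by rewrite cardsU cardU0 cardF0; lia.
have T_tint : t_intersecting t (Tt t F) by apply: Tt_t_intersecting maxF _ _ _; lia.
have U0_tau (B : {set 'I_n}) : B \subset U0 -> #|B| = t -> ~~ is_tcover t (Tt t F) B.
  by move=> _ cB; apply/negP => /tau_le; rewrite tauT cB; lia.
have [small|[W Wk near]] :=
  card_T_small_or_near t_gt0 cardU0 (subsetUl U0 F0) TUF U0cov T_tint U0_tau.
  left; apply: leq_ltn_trans small _.
  by rewrite cardsDS ?subsetUl // cardM cardU0 (_ : k + 2 - (t + 1) = k - t + 1);
    [exact: cross_bound_lt | lia].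
set bound := maxn _ _; have [lt|ge] := ltnP #|Tt t F| bound; [by left | right].
exists M, W; split=> //; apply/eqP; rewrite eqEcard near /=.
move: Wk; rewrite inE => /andP [WM /eqP cW].
apply: leq_trans ge; have -> : t + 2 = (t + 1).+1 by lia.
apply: leq_trans (card_near_ksets WM _) _; first by rewrite cW; lia.
by rewrite cardM /bound !leq_max; apply/orP; left; apply/orP; right; nia.
Qed.
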